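(* Let $n \ge 1$, let $F \in \mathbb{C}^{n \times n}$ be a unitary matrix with $|F_{ij}|^2 \leq \frac{c}{n}$ for all $i,j$ (for some constant $c>0$), let $I \in \mathbb{C}^{n\times n}$ be the identity matrix, and let $A = [F \enspace I] \in \mathbb{C}^{n \times 2n}$. Let $y = F\hat{x} + e$, where $\hat{x}, e \in \mathbb{C}^n$ and $e$ is $t$-sparse. Let $1 \leq k \leq n$ be an integer, let $T$ be a positive integer, and let $x^{[T+1]} = \mathrm{IHT}(y,A,k,t,T)$ be the output of the $(k,t)$-Iterative Hard Thresholding algorithm described in the context. Write $x^{[T+1]} = [\hat{x}^{[T+1]} \enspace e^{[T+1]}]^T$ with $\hat{x}^{[T+1]}, e^{[T+1]} \in \mathbb{C}^n$. (a) Define $\rho := \sqrt{27}\sqrt{\frac{ckt}{n}}$ and $\tau$ by $\tau(1-\rho) := \sqrt{3}\sqrt{1 + 2\sqrt{\frac{ckt}{n}}}$. If $0<\rho<1$, then $$\| \hat{x}^{[T+1]} - \hat{x}_{h(k)} \|_2 \leq \rho^{T+1} \sqrt{ \| \hat{x}_{h(k)} \|_2^2 + \|e\|_2^2 } + \tau\| \hat{x}_{t(k)} \|_2 .$$ Moreover, for any $0<\epsilon<1$ and any $T \geq \frac{\log(1/\epsilon) + \log\left(\sqrt{ \| \hat{x}_{h(k)} \|_2^2 + \|e\|_2^2 }\right)}{\log(1/\rho)}$, we have $\| \hat{x}^{[T+1]} - \hat{x}_{h(k)} \|_2 \leq \tau\| \hat{x}_{t(k)} \|_2 + \epsilon$.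 (b) Define instead $\rho := 2\sqrt{2}\sqrt{\frac{ckt}{n}}$ and $\tau$ by $\tau(1-\rho) := 2$. If $0<\rho<1$, then $$\| \hat{x}^{[T+1]} - \hat{x}_{h(k)} \|_2 \leq \rho^{T+1}\| \hat{x}_{h(k)}\|_2 + \tau\left(\|\hat{x}_{t(k)}\|_2 + \|e\|_2\right).$$ Moreover, for any $0<\epsilon<1$ and any $T \geq \frac{\log(1/\epsilon) + \log(\| \hat{x}_{h(k)}\|_2)}{\log(1/\rho)}$, we have $\| \hat{x}^{[T+1]} - \hat{x}_{h(k)} \|_2 \leq \tau\left(\|\hat{x}_{t(k)}\|_2 + \|e\|_2\right) + \epsilon$.
   Context: A vector is $k$-sparse if it has at most $k$ nonzero entries. For $x \in \mathbb{C}^n$, $x_{h(k)}$ denotes a $k$-sparse vector in $\mathbb{C}^n$ consisting of $k$ largest (in absolute value) entries of $x$ with all other entries set to zero (ties broken by a fixed predefined rule), and $x_{t(k)} := x - x_{h(k)}$. For $x = [x_1 \enspace x_2]^T \in \mathbb{C}^{2n}$ with $x_1,x_2\in\mathbb{C}^n$, $x_{h(k,t)} := [ (x_1)_{h(k)} \enspace (x_2)_{h(t)} ]^T$. The $(k,t)$-Iterative Hard Thresholding algorithm $\mathrm{IHT}(y,A,k,t,T)$, for $y\in\mathbb{C}^n$, $A \in \mathbb{C}^{n\times 2n}$ and positive integers $k,t,T$: set $x^{[0]} = 0 \in \mathbb{C}^{2n}$; for $i = 0,1,\dots,T$ set $z^{[i+1]} = x^{[i]} + A^*(y - Ax^{[i]})$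 and $x^{[i+1]} = (z^{[i+1]})_{h(k,t)}$; return $x^{[T+1]}$. Here $A^*$ is the conjugate transpose. *)

From HB Require Import structures.
From mathcomp Require Import all_boot all_order all_algebra.
From mathcomp Require Import complex.
From mathcomp Require Import all_classical all_reals exp.
Set Implicit Arguments. Unset Strict Implicit. Unset Printing Implicit Defensive.
Import Order.TTheory GRing.Theory Num.Theory.
Local Open Scope ring_scope.

Section Defs.
Variable R : realType.
Local Notation C := R[i].

Definition cabs (z : C) : R := Normc.normc z.

Definition norm2 n (v : 'cV[C]_n) : R := Num.sqrt (\sum_(i < n) cabs (v i ord0) ^+ 2).

Definition adj m n (A : 'M[C]_(m, n)) : 'M[C]_(n, m) := \matrix_(i, j) conjc (A j i).

Definition unitary n (F : 'M[C]_n) : Prop :=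
  adj F *m F = 1%:M /\ F *m adj F = 1%:M.

Definition sparse n (k : nat) (v : 'cV[C]_n) : Prop := (#|[set i | v i ord0 != 0%R]| <= k)%N.

(* Hard thresholding x_{h(k)}: keep the k largest entries in absolute value,
   ties broken by the fixed rule "smaller index first": entry i is kept iff
   fewer than k indices j precede it, where j precedes i when
   |x_j| > |x_i|, or |x_j| = |x_i| and j < i. *)
Definition precedes n (v : 'cV[C]_n) (j i : 'I_n) : bool :=
  (cabs (v i ord0) < cabs (v j ord0)) || ((cabs (v j ord0) == cabs (v i ord0)) && (j < i)%N).

Definition hthr n (k : nat) (v : 'cV[C]_n) : 'cV[C]_n :=
  \col_i (if (#|[set j | precedes v j i]| < k)%N then v i ord0 else 0%R).

Definition tthr n (k : nat) (v : 'cV[C]_n) : 'cV[C]_n := v - hthr k v.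

Definition hthr2 n (k t : nat) (x : 'cV[C]_(n + n)) : 'cV[C]_(n + n) :=
  col_mx (hthr k (usubmx x)) (hthr t (dsubmx x)).

Definition iht_step n (y : 'cV[C]_n) (A : 'M[C]_(n, n + n)) (k t : nat)
  (x : 'cV[C]_(n + n)) : 'cV[C]_(n + n) :=
  hthr2 k t (x + adj A *m (y - A *m x)).

(* IHT(y,A,k,t,T): x^[0] = 0, iterations i = 0..T, returns x^[T+1] *)
Definition IHT n (y : 'cV[C]_n) (A : 'M[C]_(n, n + n)) (k t T : nat) : 'cV[C]_(n + n) :=
  iter T.+1 (iht_step y A k t) 0.

End Defs.

(* Write u_j and v_j for the two halves of the j-th iterate.  Since F^*F = I, for
   A = [F I] an IHT step reads u_{j+1} = H_k(x + F^*(e - v_j)) and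
   v_{j+1} = H_t(e + F(x - u_j)).  Hard thresholding is quasi-optimal: if x is
   supported on a set S of at most k indices, then |H_k z - x| <= sqrt 3 |z - x|
   restricted to S and the kept indices.  Incoherence (|F_ij|^2 <= c/n) makes F
   and F^* nearly vanish between small supports: a vector supported on q indices
   is mapped to one whose restriction to any p indices has norm at most
   sqrt(p q c/n) times its own.  With s = sqrt(c k t/n) this yields coupled linear
   recursions: for (a) each of |u_{j+1} - x_h(k)| and |v_{j+1} - e| is at most
   sqrt 3 |x_t(k)| plus 2 sqrt 3 s times the other error at step j; for (b) one
   tracks |v_j| instead of |v_j - e|, at the price of the additive term
   |x_t(k)| + |e|.  Solving the recursions gives both bounds, and the epsilon
   versions are the geometric tail estimate. *)

From HB Require Import structures.
From mathcomp Require Import all_boot all_order all_algebra.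
From mathcomp Require Import complex.
From mathcomp Require Import all_classical all_reals exp.
From mathcomp Require Import ring lra zify.
Import Order.TTheory GRing.Theory Num.Theory.
Set Implicit Arguments. Unset Strict Implicit. Unset Printing Implicit Defensive.
Local Open Scope ring_scope.

Section ComplexModulus.
Variable R : realType.
Implicit Types x y : R[i].

Lemma cabs_ge0 x : 0 <= cabs x.
Proof. by case: x => a b; rewrite /cabs /= sqrtr_ge0. Qed.

Lemma cabs0 : cabs 0 = 0 :> R.
Proof. exact: Normc.normc0. Qed.

Lemma cabsM x y : cabs (x * y) = cabs x * cabs y.
Proof. exact: Normc.normcM. Qed.

Lemma cabsN x : cabs (- x) = cabs x.
Proof. exact: normcN. Qed.

Lemma cabsJ x : cabs (conjc x) = cabs x.
Proof. by case: x => a b; rewrite /cabs /= sqrrN. Qed.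

Lemma ler_cabsD x y : cabs (x + y) <= cabs x + cabs y.
Proof. exact: le_normcD. Qed.

Lemma ler_cabs_sum (I : Type) (r : seq I) (P : pred I) (f : I -> R[i]) :
  cabs (\sum_(i <- r | P i) f i) <= \sum_(i <- r | P i) cabs (f i).
Proof.
apply: (big_ind2 (fun z r => cabs z <= r)) => [|z1 z2 r1 r2 h1 h2|//].
  by rewrite cabs0.
exact: le_trans (ler_cabsD _ _) (lerD h1 h2).
Qed.

Lemma sqr_cabsE x : ((cabs x ^+ 2)%:C)%C = conjc x * x.
Proof.
case: x => a b; rewrite /cabs /= sqr_sqrtr ?addr_ge0 ?sqr_ge0 //.
by apply/eqP; rewrite eq_complex /=; apply/andP; split; apply/eqP; ring.
Qed.

End ComplexModulus.

Section RealSums.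
Variable R : realFieldType.

Lemma cauchy_schwarz (I : finType) (A : {pred I}) (a b : I -> R) :
  (\sum_(i in A) a i * b i) ^+ 2 <=
  (\sum_(i in A) a i ^+ 2) * (\sum_(i in A) b i ^+ 2).
Proof.
set P := \sum_(i in A) a i ^+ 2; set Q := \sum_(i in A) b i ^+ 2.
set X := \sum_(i in A) a i * b i.
have Q0 : 0 <= Q by apply: sumr_ge0 => i _; exact: sqr_ge0.
have [Qz|Qn0] := eqVneq Q 0.
  have b0 i : i \in A -> b i = 0.
    move=> Ai; apply/eqP; rewrite -sqrf_eq0; apply/eqP.
    move/eqP: Qz; rewrite /Q psumr_eq0 => [/allP/(_ i)|j _]; last exact: sqr_ge0.
    by rewrite mem_index_enum Ai => /(_ isT) /eqP.
  have -> : X = 0 by rewrite /X big1 // => i Ai; rewrite b0 // mulr0.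
  by rewrite Qz expr0n mulr0.
have : 0 <= \sum_(i in A) (Q * a i - X * b i) ^+ 2.
  by apply: sumr_ge0 => i _; exact: sqr_ge0.
have -> : \sum_(i in A) (Q * a i - X * b i) ^+ 2 = Q * (Q * P - X ^+ 2).
  rewrite (eq_bigr (fun i => Q ^+ 2 * a i ^+ 2 - (2 * Q * X) * (a i * b i)
                             + X ^+ 2 * b i ^+ 2)) => [|i _]; last by ring.
  by rewrite big_split /= sumrB -!mulr_sumr -/P -/Q -/X; ring.
by rewrite pmulr_rge0 ?lt_def ?Qn0 // subr_ge0 mulrC.
Qed.

Lemma sum_le_dominating (I : finType) (A B : {set I}) (f : I -> R) :
  (#|B| <= #|A|)%N -> (forall i j, i \in A -> j \in B -> f j <= f i) ->
  (forall i, 0 <= f i) ->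
  \sum_(j in B) f j <= \sum_(i in A) f i.
Proof.
move=> cBA f_dom f_ge0.
have [A0|A_gt0] := posnP #|A|.
  by move: cBA; rewrite A0 leqn0 cards_eq0 => /eqP ->; rewrite big_set0 sumr_ge0.
have fB_le i : i \in A -> \sum_(j in B) f j <= #|B|%:R * f i.
  move=> iA; rewrite mulr_natl -sumr_const.
  by apply: ler_sum => j jB; exact: f_dom.
have : #|A|%:R * \sum_(j in B) f j <= #|B|%:R * \sum_(i in A) f i.
  rewrite [X in _ <= X]mulr_sumr [X in X <= _]mulr_natl -sumr_const.
  by apply: ler_sum => i iA; exact: fB_le.
have : (#|B|%:R : R) <= #|A|%:R by rewrite ler_nat.
have : (0 : R) < #|A|%:R by rewrite ltr0n.
have : 0 <= \sum_(i in A) f i by exact: sumr_ge0.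
nra.
Qed.

End RealSums.

Section PartialNorms.
Variable R : realType.
Local Notation C := R[i].
Variable n : nat.
Implicit Types (A B W : {set 'I_n}) (v w : 'cV[C]_n).

Definition sqnorm_on A v : R := \sum_(i in A) cabs (v i ord0) ^+ 2.

Definition norm_on A v : R := Num.sqrt (sqnorm_on A v).

Definition supported_on W v : Prop := forall i, i \notin W -> v i ord0 = 0.

Lemma sqnorm_on_ge0 A v : 0 <= sqnorm_on A v.
Proof. by apply: sumr_ge0 => i _; exact: sqr_ge0. Qed.

Lemma norm2E v : norm2 v = norm_on [set: 'I_n] v.
Proof.
by rewrite /norm2 /norm_on /sqnorm_on; congr Num.sqrt; apply: eq_bigl => i; rewrite inE.
Qed.

Lemma norm2_ge0 v : 0 <= norm2 v.
Proof. exact: sqrtr_ge0. Qed.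

Lemma sqnorm_onN A v : sqnorm_on A (- v) = sqnorm_on A v.
Proof. by apply: eq_bigr => i _; rewrite mxE cabsN. Qed.

Lemma norm2N v : norm2 (- v) = norm2 v.
Proof. by rewrite !norm2E /norm_on sqnorm_onN. Qed.

Lemma norm20 : norm2 (0 : 'cV[C]_n) = 0.
Proof. by rewrite /norm2 big1 ?sqrtr0 // => i _; rewrite mxE cabs0 expr0n. Qed.

Lemma sqnorm_on_subset A B v : A \subset B -> sqnorm_on A v <= sqnorm_on B v.
Proof.
move=> AB; rewrite /sqnorm_on [X in _ <= X](bigID (mem A)) /=.
have -> : \sum_(i in B | i \in A) cabs (v i ord0) ^+ 2 = sqnorm_on A v.
  apply: eq_bigl => i; case iA: (i \in A); rewrite ?andbF ?andbT //.
  exact: (fintype.subsetP AB).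
by rewrite lerDl; apply: sumr_ge0 => i _; exact: sqr_ge0.
Qed.

Lemma norm_on_le_norm2 A v : norm_on A v <= norm2 v.
Proof. by rewrite norm2E ler_sqrt ?sqnorm_on_ge0 // sqnorm_on_subset ?finset.subsetT. Qed.

Lemma norm_onD A v w : norm_on A (v + w) <= norm_on A v + norm_on A w.
Proof.
rewrite /norm_on; set P := sqnorm_on A v; set Q := sqnorm_on A w.
set X := \sum_(i in A) cabs (v i ord0) * cabs (w i ord0).
have P0 : 0 <= P := sqnorm_on_ge0 _ _; have Q0 : 0 <= Q := sqnorm_on_ge0 _ _.
have le_expand : sqnorm_on A (v + w) <= P + 2 * X + Q.
  rewrite /P /Q /X /sqnorm_on mulr_sumr -!big_split /=; apply: ler_sum => i _.
  rewrite mxE; have := ler_cabsD (v i ord0) (w i ord0).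
  have := cabs_ge0 (v i ord0); have := cabs_ge0 (w i ord0).
  have := cabs_ge0 (v i ord0 + w i ord0); nra.
have le_X : X <= Num.sqrt P * Num.sqrt Q.
  rewrite -sqrtrM // (le_trans (ler_norm _)) // -sqrtr_sqr ler_sqrt ?mulr_ge0 //.
  exact: cauchy_schwarz.
have : sqnorm_on A (v + w) <= (Num.sqrt P + Num.sqrt Q) ^+ 2.
  by have := sqr_sqrtr P0; have := sqr_sqrtr Q0; nra.
by rewrite -ler_sqrt ?sqr_ge0 // sqrtr_sqr ger0_norm ?addr_ge0 ?sqrtr_ge0.
Qed.

Lemma norm_onB A v w : norm_on A (v - w) <= norm_on A v + norm_on A w.
Proof. by rewrite -[norm_on A w]/(Num.sqrt _) -(sqnorm_onN A w) norm_onD. Qed.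

Lemma supported_onB W1 W2 v w :
  supported_on W1 v -> supported_on W2 w -> supported_on (W1 :|: W2) (v - w).
Proof.
move=> v0 w0 i; rewrite finset.in_setU negb_or => /andP[iW1 iW2].
by rewrite !mxE v0 // w0 // subr0.
Qed.

Lemma norm_on_mulmx_le (M : 'M[C]_n) (g : R) U W w :
  0 <= g -> (forall i j, cabs (M i j) ^+ 2 <= g) -> supported_on W w ->
  norm_on U (M *m w) <= Num.sqrt (#|U|%:R * #|W|%:R * g) * norm2 w.
Proof.
move=> g0 M_le w0; rewrite norm2E /norm_on -sqrtrM ?mulr_ge0 // ler_sqrt;
  last by rewrite !mulr_ge0 ?sqnorm_on_ge0.
have entry_le i : cabs ((M *m w) i ord0) ^+ 2 <= #|W|%:R * g * sqnorm_on W w.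
  have -> : (M *m w) i ord0 = \sum_(j in W) M i j * w j ord0.
    rewrite mxE [RHS]big_mkcond; apply: eq_bigr => j _.
    by case: ifPn => // /w0 ->; rewrite mulr0.
  have cs := cauchy_schwarz W (fun j => cabs (M i j)) (fun j => cabs (w j ord0)).
  apply: le_trans (le_trans cs _).
  - have S0 : 0 <= \sum_(j in W) cabs (M i j) * cabs (w j ord0).
      by apply: sumr_ge0 => j _; rewrite mulr_ge0 ?cabs_ge0.
    rewrite lerXn2r ?nnegrE ?cabs_ge0 //.
    by apply: le_trans (ler_cabs_sum _ _ _) _; apply: ler_sum => j _; rewrite cabsM.
  apply: ler_wpM2r; first exact: sqnorm_on_ge0.
  by rewrite mulr_natl -sumr_const; apply: ler_sum => j _.
rewrite /sqnorm_on (le_trans (ler_sum _ (fun i _ => entry_le i))) // sumr_const.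
rewrite -!mulrA [in X in _ <= X]mulr_natl lerMn2r; apply/orP; right.
do 2 apply: ler_wpM2l => //.
exact/sqnorm_on_subset/finset.subsetT.
Qed.

End PartialNorms.

Section Adjoint.
Variable R : realType.
Local Notation C := R[i].

Lemma adjK m n (A : 'M[C]_(m, n)) : adj (adj A) = A.
Proof. by apply/matrixP => i j; rewrite !mxE conjcK. Qed.

Lemma adj_mulmx m n p (A : 'M[C]_(m, n)) (B : 'M[C]_(n, p)) :
  adj (A *m B) = adj B *m adj A.
Proof.
apply/matrixP => i j; rewrite !mxE rmorph_sum; apply: eq_bigr => l _.
by rewrite !mxE rmorphM mulrC.
Qed.

Lemma adj1 n : adj (1%:M : 'M[C]_n) = 1%:M.
Proof. by apply/matrixP => i j; rewrite !mxE eq_sym conjc_nat. Qed.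

Lemma adj_row_mx m n1 n2 (A : 'M[C]_(m, n1)) (B : 'M[C]_(m, n2)) :
  adj (row_mx A B) = col_mx (adj A) (adj B).
Proof.
apply/matrixP => i j; rewrite -(fintype.splitK i); case: (fintype.split i) => i' /=.
  by rewrite col_mxEu mxE row_mxEl mxE.
by rewrite col_mxEd mxE row_mxEr mxE.
Qed.

Lemma sqnorm_adjE n (v : 'cV[C]_n) :
  ((sqnorm_on [set: 'I_n] v)%:C)%C = (adj v *m v) ord0 ord0.
Proof.
rewrite mxE rmorph_sum /=; apply: eq_big => [i|i _]; first by rewrite inE.
by rewrite sqr_cabsE mxE.
Qed.

Lemma norm2_isometry m n (F : 'M[C]_(m, n)) (w : 'cV[C]_n) :
  adj F *m F = 1%:M -> norm2 (F *m w) = norm2 w.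
Proof.
move=> FF; rewrite !norm2E /norm_on; congr Num.sqrt; apply: (@complexI R).
by rewrite !sqnorm_adjE adj_mulmx -mulmxA (mulmxA (adj F)) FF mul1mx.
Qed.

End Adjoint.

Lemma card_ord_lt n k : #|[set m : 'I_n | (m < k)%N]| = minn k n.
Proof.
rewrite -sum1_card big_mkcond /=.
rewrite (eq_bigr (fun m : 'I_n => if (m < k)%N then 1%N else 0%N)) => [|m _]; last first.
  by rewrite inE.
rewrite -(big_mkord xpredT (fun m => if (m < k)%N then 1%N else 0%N)).
elim: n => [|n IHn]; first by rewrite big_nil minn0.
by rewrite big_nat_recr //= IHn; case: ifP => lt_nk; lia.
Qed.

Section HardThresholding.
Variable R : realType.
Local Notation C := R[i].
Variable n : nat.
Implicit Types (z x : 'cV[C]_n) (S : {set 'I_n}).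

Definition prec_rank z i : nat := #|[set j | precedes z j i]|.

Definition kept k z : {set 'I_n} := [set i | (prec_rank z i < k)%N].

Lemma hthrE k z i : hthr k z i ord0 = if i \in kept k z then z i ord0 else 0.
Proof. by rewrite mxE inE. Qed.

Lemma precedes_irr z i : ~~ precedes z i i.
Proof. by rewrite /precedes ltxx ltnn andbF. Qed.

Lemma precedes_trans z a b d : precedes z a b -> precedes z b d -> precedes z a d.
Proof.
rewrite /precedes => /orP[h1|/andP[/eqP e1 h1]] /orP[h2|/andP[/eqP e2 h2]].
- by rewrite (lt_trans h2 h1).
- by rewrite -e2 h1.
- by rewrite e1 h2.
- by rewrite e1 e2 eqxx (ltn_trans h1 h2) orbT.
Qed.

Lemma precedes_total z a b : a != b -> precedes z a b || precedes z b a.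
Proof.
move=> ab; rewrite /precedes.
case: (ltgtP (cabs (z b ord0)) (cabs (z a ord0))) => //= _.
by case: (ltngtP a b) => // /val_inj eq_ab; rewrite eq_ab eqxx in ab.
Qed.

Lemma prec_rank_lt z i : (prec_rank z i < n)%N.
Proof.
rewrite /prec_rank -[X in (_ < X)%N]card_ord -cardsT; apply: proper_card.
apply/properP; split; first exact: finset.subsetT.
by exists i; rewrite ?inE ?precedes_irr.
Qed.

Lemma prec_rank_mono z a b : precedes z a b -> (prec_rank z a < prec_rank z b)%N.
Proof.
move=> ab; apply: proper_card; apply/properP; split.
  by apply/fintype.subsetP => j; rewrite !inE => /precedes_trans; apply.
by exists a; rewrite !inE ?precedes_irr.
Qed.

Lemma prec_rank_inj z : injective (prec_rank z).
Proof.
move=> a b eq_ab; apply/eqP; apply: contraT => /(precedes_total z).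
by case/orP => /prec_rank_mono; rewrite eq_ab ltnn.
Qed.

Lemma card_kept k z : #|kept k z| = minn k n.
Proof.
have -> : kept k z = (fun i => Ordinal (prec_rank_lt z i)) @^-1: [set m : 'I_n | (m < k)%N].
  by apply/setP => i; rewrite !inE.
by rewrite card_preimset ?card_ord_lt // => a b /(congr1 val) /prec_rank_inj.
Qed.

Lemma card_kept_le k z : (#|kept k z| <= k)%N.
Proof. by rewrite card_kept geq_minl. Qed.

Lemma kept_dominates k z i j :
  i \in kept k z -> j \notin kept k z -> cabs (z j ord0) <= cabs (z i ord0).
Proof.
rewrite !inE -leqNgt => ik jk; rewrite leNgt; apply/negP => lt_ij.
have : precedes z j i by rewrite /precedes lt_ij.
by move/prec_rank_mono; lia.
Qed.

Lemma supported_on_hthr k z : supported_on (kept k z) (hthr k z).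
Proof. by move=> i /negbTE ik; rewrite hthrE ik. Qed.

Lemma norm2_hthr k z : norm2 (hthr k z) = norm_on (kept k z) z.
Proof.
rewrite norm2E /norm_on /sqnorm_on big_mkcond [in RHS]big_mkcond.
congr Num.sqrt; apply: eq_bigr => i _; rewrite inE hthrE.
by case: ifP => // _; rewrite cabs0 expr0n.
Qed.

Lemma sqnorm_hthr_sub k z x S : supported_on S x ->
  sqnorm_on [set: 'I_n] (hthr k z - x) =
  sqnorm_on (kept k z) (z - x) + sqnorm_on (S :\: kept k z) x.
Proof.
move=> x0; rewrite /sqnorm_on [in RHS]big_mkcond [X in _ = _ + X]big_mkcond.
rewrite -big_split big_mkcond /=; apply: eq_bigr => i _.
rewrite finset.in_setT [(hthr k z - x) i ord0]mxE hthrE !mxE [i \in S :\: _]inE.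
case: (i \in kept k z) => /=; first by rewrite addr0.
case iS: (i \in S); first by rewrite sub0r cabsN add0r.
by rewrite x0 ?iS // subr0 cabs0 expr0n add0r.
Qed.

Lemma sqnorm_dropped_le k z S : (#|S| <= k)%N ->
  sqnorm_on (S :\: kept k z) z <= sqnorm_on (kept k z :\: S) z.
Proof.
move=> cS; apply: sum_le_dominating => [|i j|i]; last exact: sqr_ge0.
  have : (#|S| <= #|kept k z|)%N.
    by rewrite card_kept leq_min cS -[X in (_ <= X)%N](card_ord n) max_card.
  by rewrite !cardsD finset.setIC; lia.
rewrite !finset.in_setD => /andP[_ ik] /andP[jk _].
by rewrite lerXn2r ?nnegrE ?cabs_ge0 // (kept_dominates ik jk).
Qed.

Lemma hthr_sub_sqnorm_le k z x S : (#|S| <= k)%N -> supported_on S x ->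
  sqnorm_on [set: 'I_n] (hthr k z - x) <= 3 * sqnorm_on (S :|: kept k z) (z - x).
Proof.
move=> cS x0; rewrite (sqnorm_hthr_sub _ _ x0); set K := kept k z.
set g := fun i => cabs ((z - x) i ord0) ^+ 2.
have g_ge0 i : 0 <= g i by exact: sqr_ge0.
have x_le i : cabs (x i ord0) ^+ 2 <= 2 * g i + 2 * cabs (z i ord0) ^+ 2.
  have : cabs (x i ord0) <= cabs (z i ord0) + cabs ((z - x) i ord0).
    have -> : x i ord0 = z i ord0 + - (z - x) i ord0 by rewrite !mxE opprB addrC subrK.
    by apply: le_trans (ler_cabsD _ _) _; rewrite cabsN.
  rewrite /g; set a := cabs (z i ord0); set b := cabs ((z - x) i ord0) => le_xab.
  apply: le_trans (_ : _ <= (a + b) ^+ 2) _.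
    by rewrite lerXn2r ?nnegrE ?addr_ge0 ?cabs_ge0.
  by have := sqr_ge0 (a - b); lra.
have zK i : i \in K :\: S -> cabs (z i ord0) ^+ 2 = g i.
  by rewrite inE => /andP[/x0 xi0 _]; rewrite /g !mxE xi0 subr0.
have := sqnorm_dropped_le z cS.
rewrite -/K /sqnorm_on (eq_bigr g zK) => dropped_le.
have x_dropped_le : \sum_(i in S :\: K) cabs (x i ord0) ^+ 2 <=
       2 * \sum_(i in S :\: K) g i + 2 * \sum_(i in K :\: S) g i.
  apply: le_trans (ler_sum _ (fun i _ => x_le i)) _.
  by rewrite big_split /= -!mulr_sumr lerD2l ler_wpM2l.
suff : \sum_(i in K) g i + (2 * \sum_(i in S :\: K) g i + 2 * \sum_(i in K :\: S) g i)
       <= 3 * \sum_(i in S :|: K) g i by lra.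
rewrite !mulr_sumr !(big_mkcond (fun i => i \in _)) -!big_split /=.
apply: ler_sum => i _; rewrite !finset.in_setD !finset.in_setU.
by case: (i \in K); case: (i \in S); rewrite /= ?mulr0 ?addr0 ?add0r; have := g_ge0 i; lra.
Qed.

Lemma hthr_sub_norm_le k z x S : (#|S| <= k)%N -> supported_on S x ->
  norm2 (hthr k z - x) <= Num.sqrt 3 * norm_on (S :|: kept k z) (z - x).
Proof.
move=> cS x0; rewrite norm2E /norm_on -sqrtrM // ler_sqrt ?mulr_ge0 ?sqnorm_on_ge0 //.
exact: hthr_sub_sqnorm_le.
Qed.

End HardThresholding.

Lemma card_setU_le (T : finType) (A B : {set T}) p q :
  (#|A| <= p)%N -> (#|B| <= q)%N -> (#|A :|: B| <= p + q)%N.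
Proof. by move=> cA cB; rewrite cardsU; lia. Qed.

Lemma iht_step_row_mx1 (R : realType) n (F : 'M[R[i]]_n) y k t x :
  iht_step y (row_mx F 1%:M) k t x =
  col_mx (hthr k (usubmx x + adj F *m (y - (F *m usubmx x + dsubmx x))))
         (hthr t (dsubmx x + (y - (F *m usubmx x + dsubmx x)))).
Proof.
rewrite /iht_step /hthr2 -[x in LHS]vsubmxK mul_row_col mul1mx adj_row_mx adj1.
by rewrite mul_col_mx mul1mx add_col_mx col_mxKu col_mxKd.
Qed.

Lemma geometric_tail_le (R : realType) (rho M eps : R) (T : nat) :
  0 < rho < 1 -> 0 <= M -> 0 < eps ->
  (ln (1 / eps) + ln M) / ln (1 / rho) <= T%:R -> rho ^+ T.+1 * M <= eps.
Proof.
move=> /andP[rho_gt0 rho_lt1] M_ge0 eps_gt0 T_ge.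
have [->|M_neq0] := eqVneq M 0; first by rewrite mulr0 ltW.
have M_gt0 : 0 < M by rewrite lt_def M_neq0 M_ge0.
have ln_rho_gt0 : 0 < ln (1 / rho) by apply: ln_gt0; rewrite div1r invf_gt1.
rewrite ler_pdivrMr // in T_ge.
rewrite !div1r !lnV ?posrE // in T_ge ln_rho_gt0.
have : ln (M * rho ^+ T) <= ln eps.
  by rewrite lnM ?posrE ?exprn_gt0 // lnXn // -mulr_natl; lra.
rewrite ler_ln ?posrE ?mulr_gt0 ?exprn_gt0 // => le_eps.
rewrite exprS -mulrA; apply: le_trans le_eps.
by rewrite [M * _]mulrC ler_piMl ?mulr_ge0 ?exprn_ge0 ?ltW.
Qed.

Section CoupledRecursions.
Variable R : realFieldType.
Implicit Types p q : nat -> R.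

Lemma coupled_geometric_le (L b M tau : R) p q :
  0 <= L -> 0 <= tau -> b + L * tau = tau -> p 0 <= M -> q 0 <= M ->
  (forall j, p j.+1 <= b + L * q j) -> (forall j, q j.+1 <= b + L * p j) ->
  forall j, p j <= L ^+ j * M + tau /\ q j <= L ^+ j * M + tau.
Proof.
move=> L_ge0 tau_ge0 tau_fix p0 q0 p_succ q_succ.
have step j a : a <= L ^+ j * M + tau -> b + L * a <= L ^+ j.+1 * M + tau.
  move=> a_le; rewrite -tau_fix exprS -mulrA addrCA -mulrDr lerD2l.
  by rewrite ler_wpM2l.
elim=> [|j [p_le q_le]].
  by rewrite expr0 mul1r; split; [apply: le_trans p0 _ | apply: le_trans q0 _]; rewrite lerDl.
split; [exact: le_trans (p_succ j) (step _ _ q_le)|].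
exact: le_trans (q_succ j) (step _ _ p_le).
Qed.

Lemma two_step_geometric_le (sigma tau D H : R) p q :
  0 <= sigma -> 0 <= tau -> 0 <= D -> 0 <= H -> tau * (1 - 2 * sigma) = 2 ->
  p 0 <= H -> q 0 <= 0 ->
  (forall j, p j.+1 <= 2 * D + 2 * sigma * q j) -> (forall j, q j.+1 <= D + sigma * p j) ->
  forall j, p j <= (2 * sigma) ^+ j * H + tau * D.
Proof.
move=> s_ge0 tau_ge0 D_ge0 H_ge0 tau_eq p0 q0 p_succ q_succ.
have tau_ge2 : 2 <= tau by have := mulr_ge0 tau_ge0 s_ge0; lra.
suff two_steps j : p j <= (2 * sigma) ^+ j * H + tau * D ->
    p j.+2 <= (2 * sigma) ^+ j.+2 * H + tau * D.
  suff bound j : p j <= (2 * sigma) ^+ j * H + tau * D /\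
                 p j.+1 <= (2 * sigma) ^+ j.+1 * H + tau * D.
    by move=> j; exact: (bound j).1.
  elim: j => [|j [p_le p_le1]]; last by split; [exact: p_le1 | exact: two_steps].
  split; first by rewrite expr0 mul1r (le_trans p0) // lerDl mulr_ge0.
  apply: le_trans (p_succ 0) _; rewrite expr1.
  have := mulr_ge0 (mulr_ge0 (ler0n _ 2) s_ge0) H_ge0.
  have := ler_wpM2r D_ge0 tau_ge2; have := ler_wpM2l (mulr_ge0 (ler0n _ 2) s_ge0) q0.
  lra.
(* [tau = 2 + 2 sigma tau] absorbs the error terms picked up along the two steps *)
set P := (2 * sigma) ^+ j * H => p_le.
have P_ge0 : 0 <= P by rewrite mulr_ge0 ?exprn_ge0 ?mulr_ge0.
have q_le := ler_wpM2l s_ge0 (q_succ j).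
have p_le' := ler_wpM2l (mulr_ge0 s_ge0 s_ge0) p_le.
have absorbD : tau * D - 2 * sigma * tau * D = 2 * D.
  by rewrite -[in RHS]tau_eq; ring.
have absorbSD : sigma * tau * D - 2 * sigma * sigma * tau * D = 2 * sigma * D.
  by rewrite -[in RHS]tau_eq; ring.
have -> : (2 * sigma) ^+ j.+2 * H = 4 * (sigma * sigma * P) by rewrite /P !exprS; ring.
have := p_succ j.+1; have := mulr_ge0 (mulr_ge0 s_ge0 s_ge0) P_ge0.
have := mulr_ge0 (mulr_ge0 s_ge0 tau_ge0) D_ge0.
lra.
Qed.

End CoupledRecursions.

Lemma le_sqrt_sqrD (R : rcfType) (a b : R) : 0 <= a -> a <= Num.sqrt (a ^+ 2 + b ^+ 2).
Proof.
move=> a_ge0; rewrite -[X in X <= _]ger0_norm // -sqrtr_sqr ler_sqrt ?addr_ge0 ?sqr_ge0 //.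
by rewrite lerDl sqr_ge0.
Qed.

Section IHTErrors.
Variable R : realType.
Local Notation C := R[i].
Variables (n : nat) (F : 'M[C]_n) (c : R) (xhat e : 'cV[C]_n) (k t : nat).
Hypotheses (FF : adj F *m F = 1%:M) (FF' : F *m adj F = 1%:M) (c_ge0 : 0 <= c)
  (F_coh : forall i j, cabs (F i j) ^+ 2 <= c / n%:R) (e_sparse : sparse t e).

Definition iterate j := iter j (iht_step (F *m xhat + e) (row_mx F 1%:M) k t) 0.

Local Notation u j := (usubmx (iterate j)).
Local Notation v j := (dsubmx (iterate j)).
Local Notation xh := (hthr k xhat).
Local Notation xt := (tthr k xhat).
Local Notation s := (Num.sqrt (c * k%:R * t%:R / n%:R)).

Lemma residualE (w z : 'cV[C]_n) :
  F *m xhat + e - (F *m w + z) = F *m (xhat - w) + (e - z).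
Proof. by rewrite mulmxBr opprD addrACA. Qed.

Lemma u_succ j : u j.+1 = hthr k (xhat + adj F *m (e - v j)).
Proof.
rewrite /iterate iterS -/(iterate j) iht_step_row_mx1 col_mxKu; congr hthr.
by rewrite residualE mulmxDr mulmxA FF mul1mx addrA addrCA subrr addr0.
Qed.

Lemma v_succ j : v j.+1 = hthr t (e + F *m (xhat - u j)).
Proof.
rewrite /iterate iterS -/(iterate j) iht_step_row_mx1 col_mxKd; congr hthr.
by rewrite residualE addrCA [v j + _]addrC subrK addrC.
Qed.

Lemma u0 : u 0 = 0.
Proof. by apply/matrixP => i j; rewrite !mxE. Qed.

Lemma v0 : v 0 = 0.
Proof. by apply/matrixP => i j; rewrite !mxE. Qed.

Lemma u_sparse j : exists2 W : {set 'I_n}, (#|W| <= k)%N & supported_on W (u j).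
Proof.
case: j => [|j]; first by exists finset.set0; rewrite ?cards0 // u0 => i _; rewrite mxE.
by rewrite u_succ; exists (kept k (xhat + adj F *m (e - v j)));
  [exact: card_kept_le | exact: supported_on_hthr].
Qed.

Lemma v_sparse j : exists2 W : {set 'I_n}, (#|W| <= t)%N & supported_on W (v j).
Proof.
case: j => [|j]; first by exists finset.set0; rewrite ?cards0 // v0 => i _; rewrite mxE.
by rewrite v_succ; exists (kept t (e + F *m (xhat - u j)));
  [exact: card_kept_le | exact: supported_on_hthr].
Qed.

Lemma e_supported : supported_on [set i | e i ord0 != 0] e.
Proof. by move=> i; rewrite inE negbK => /eqP. Qed.

Lemma xh_supported : supported_on (kept k xhat) xh.
Proof. exact: supported_on_hthr. Qed.

Lemma adjF_coh i j : cabs (adj F i j) ^+ 2 <= c / n%:R.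
Proof. by rewrite mxE cabsJ. Qed.

Lemma norm2_F w : norm2 (F *m w) = norm2 w.
Proof. exact: norm2_isometry. Qed.

Lemma norm2_adjF w : norm2 (adj F *m w) = norm2 w.
Proof. by apply: norm2_isometry; rewrite adjK. Qed.

Lemma cross_le (M : 'M[C]_n) (U W : {set 'I_n}) w p q a :
  (forall i j, cabs (M i j) ^+ 2 <= c / n%:R) ->
  (#|U| <= p)%N -> (#|W| <= q)%N -> (p * q = a * (k * t))%N -> supported_on W w ->
  norm_on U (M *m w) <= Num.sqrt a%:R * s * norm2 w.
Proof.
move=> M_coh cU cW pq w0; set g := c / n%:R.
have g_ge0 : 0 <= g by rewrite divr_ge0.
have -> : Num.sqrt a%:R * s = Num.sqrt ((p * q)%:R * g).
  by rewrite -sqrtrM // pq !natrM /g; congr Num.sqrt; ring.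
apply: le_trans (norm_on_mulmx_le _ g_ge0 M_coh w0) _.
rewrite ler_wpM2r ?norm2_ge0 // ler_sqrt; last by rewrite mulr_ge0.
by rewrite natrM ler_wpM2r // ler_pM ?ler_nat.
Qed.

Lemma sqrt4 : Num.sqrt 4 = 2 :> R.
Proof. by rewrite -[4]/(2 * 2)%:R natrM -expr2 sqrtr_sqr ger0_norm. Qed.

Lemma xerr_succ_le j :
  norm2 (u j.+1 - xh) <= Num.sqrt 3 * (norm2 xt + 2 * s * norm2 (v j - e)).
Proof.
rewrite u_succ.
apply: le_trans (hthr_sub_norm_le _ (card_kept_le k xhat) xh_supported) _.
rewrite ler_wpM2l ?sqrtr_ge0 //.
have -> : xhat + adj F *m (e - v j) - xh = xt - adj F *m (v j - e).
  by rewrite /tthr -(opprB (v j) e) mulmxN addrAC.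
apply: le_trans (norm_onB _ _ _) _; rewrite lerD ?norm_on_le_norm2 //.
have [W cW W_v] := v_sparse j.
rewrite -sqrt4; apply: cross_le adjF_coh _ _ _ (supported_onB W_v e_supported).
- by apply: card_setU_le; exact: card_kept_le.
- exact: card_setU_le cW e_sparse.
- by nia.
Qed.

Lemma eerr_succ_le j :
  norm2 (v j.+1 - e) <= Num.sqrt 3 * (norm2 xt + 2 * s * norm2 (u j - xh)).
Proof.
rewrite v_succ; apply: le_trans (hthr_sub_norm_le _ e_sparse e_supported) _.
rewrite ler_wpM2l ?sqrtr_ge0 //.
have -> : e + F *m (xhat - u j) - e = F *m xt - F *m (u j - xh).
  by rewrite addrAC subrr add0r /tthr -mulmxBr opprB addrA subrK.
apply: le_trans (norm_onB _ _ _) _; rewrite lerD //.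
  by rewrite -(norm2_F xt) norm_on_le_norm2.
have [W cW W_u] := u_sparse j.
rewrite -sqrt4; apply: cross_le F_coh _ _ _ (supported_onB W_u xh_supported).
- by apply: card_setU_le e_sparse _; exact: card_kept_le.
- by apply: card_setU_le cW _; exact: card_kept_le.
- by nia.
Qed.

Lemma xerr_succ_le_coarse j :
  norm2 (u j.+1 - xh) <= 2 * (norm2 xt + norm2 e) + 2 * Num.sqrt 2 * s * norm2 (v j).
Proof.
rewrite u_succ.
apply: le_trans (hthr_sub_norm_le _ (card_kept_le k xhat) xh_supported) _.
have -> : xhat + adj F *m (e - v j) - xh = xt + adj F *m e - adj F *m v j.
  by rewrite /tthr mulmxBr addrAC addrA.
set Q := norm2 xt + norm2 e + Num.sqrt 2 * s * norm2 (v j).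
have Q_ge0 : 0 <= Q by rewrite !addr_ge0 ?norm2_ge0 // !mulr_ge0 ?sqrtr_ge0 ?norm2_ge0.
have sqrt3_le2 : Num.sqrt 3 <= 2 :> R.
  by rewrite -sqrt4 ler_sqrt // ler_nat.
apply: le_trans (_ : Num.sqrt 3 * Q <= _); last first.
  by rewrite [X in _ <= X](_ : _ = 2 * Q) ?ler_wpM2r // /Q; ring.
apply: ler_wpM2l; first exact: sqrtr_ge0.
apply: le_trans (norm_onB _ _ _) _; apply: lerD.
  apply: le_trans (norm_onD _ _ _) _; rewrite lerD ?norm_on_le_norm2 //.
  by rewrite -(norm2_adjF e) norm_on_le_norm2.
have [W cW W_v] := v_sparse j.
apply: cross_le adjF_coh _ cW _ W_v.
- by apply: card_setU_le; exact: card_kept_le.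
- by nia.
Qed.

Lemma enorm_succ_le j :
  norm2 (v j.+1) <= norm2 xt + norm2 e + Num.sqrt 2 * s * norm2 (u j - xh).
Proof.
rewrite v_succ norm2_hthr.
have -> : e + F *m (xhat - u j) = e + F *m xt - F *m (u j - xh).
  by rewrite -addrA -mulmxBr /tthr opprB addrA subrK.
apply: le_trans (norm_onB _ _ _) _; apply: lerD.
  apply: le_trans (norm_onD _ _ _) _; rewrite addrC lerD ?norm_on_le_norm2 //.
  by rewrite -(norm2_F xt) norm_on_le_norm2.
have [W cW W_u] := u_sparse j.
apply: cross_le F_coh (card_kept_le _ _) _ _ (supported_onB W_u xh_supported).
- by apply: card_setU_le cW _; exact: card_kept_le.
- by nia.
Qed.

Local Notation M := (Num.sqrt (norm2 xh ^+ 2 + norm2 e ^+ 2)).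

Lemma sqrt27 : Num.sqrt 27 = 3 * Num.sqrt 3 :> R.
Proof. by rewrite -[27]/(3 ^ 2 * 3)%:R natrM natrX sqrtrM ?sqr_ge0 // sqrtr_sqr ger0_norm. Qed.

(* The recursion contracts at the rate [2 sqrt 3 s], below the stated [sqrt 27 s]. *)
Lemma iht_bound_a T : 0 < Num.sqrt 27 * s < 1 ->
  norm2 (u T.+1 - xh) <= (Num.sqrt 27 * s) ^+ T.+1 * M +
    Num.sqrt 3 * Num.sqrt (1 + 2 * s) / (1 - Num.sqrt 27 * s) * norm2 xt.
Proof.
case/andP=> rho_gt0 rho_lt1; set L := 2 * Num.sqrt 3 * s.
have s_ge0 : 0 <= s := sqrtr_ge0 _.
have sqrt3_ge0 : 0 <= Num.sqrt 3 :> R := sqrtr_ge0 _.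
have L_ge0 : 0 <= L by rewrite !mulr_ge0.
have L_le : L <= Num.sqrt 27 * s by rewrite /L sqrt27 !ler_wpM2r // ler_nat.
have L_lt1 : L < 1 := le_lt_trans L_le rho_lt1.
have X_ge0 : 0 <= norm2 xt := norm2_ge0 _.
set tau := Num.sqrt 3 / (1 - L) * norm2 xt.
have tau_ge0 : 0 <= tau by rewrite !mulr_ge0 // invr_ge0 subr_ge0 ltW.
have tau_fix : Num.sqrt 3 * norm2 xt + L * tau = tau.
  by rewrite /tau; field; rewrite subr_eq0 gt_eqF.
have p0 : norm2 (u 0 - xh) <= M by rewrite u0 sub0r norm2N le_sqrt_sqrD ?norm2_ge0.
have q0 : norm2 (v 0 - e) <= M.
  by rewrite v0 sub0r norm2N addrC le_sqrt_sqrD ?norm2_ge0.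
have p_succ j : norm2 (u j.+1 - xh) <= Num.sqrt 3 * norm2 xt + L * norm2 (v j - e).
  by have := xerr_succ_le j; rewrite /L; lra.
have q_succ j : norm2 (v j.+1 - e) <= Num.sqrt 3 * norm2 xt + L * norm2 (u j - xh).
  by have := eerr_succ_le j; rewrite /L; lra.
have [bound _] := coupled_geometric_le (p := fun j => norm2 (u j - xh))
  (q := fun j => norm2 (v j - e)) L_ge0 tau_ge0 tau_fix p0 q0 p_succ q_succ T.+1.
apply: le_trans bound _; apply: lerD.
  by rewrite ler_wpM2r ?sqrtr_ge0 // lerXn2r // nnegrE ltW.
rewrite /tau ler_wpM2r // ler_pdivrMr ?subr_gt0 // mulrAC ler_pdivlMr ?subr_gt0 //.
have sqrt_ge1 : 1 <= Num.sqrt (1 + 2 * s).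
  by rewrite -[X in X <= _]sqrtr1 ler_sqrt ?addr_ge0 ?lerDl // mulr_ge0.
rewrite -[_ * _ * (1 - L)]mulrA; apply: ler_wpM2l => //.
apply: (le_trans (_ : _ <= 1 - L)).
  by rewrite lerD2l lerN2.
by rewrite ler_peMl // subr_ge0 ltW.
Qed.

Lemma iht_bound_b T : 0 < 2 * Num.sqrt 2 * s < 1 ->
  norm2 (u T.+1 - xh) <=
    (2 * Num.sqrt 2 * s) ^+ T.+1 * norm2 xh +
    2 / (1 - 2 * Num.sqrt 2 * s) * (norm2 xt + norm2 e).
Proof.
rewrite -mulrA => /andP[rho_gt0 rho_lt1].
have sigma_ge0 : 0 <= Num.sqrt 2 * s by rewrite mulr_ge0 ?sqrtr_ge0.
have tau_ge0 : 0 <= 2 / (1 - 2 * (Num.sqrt 2 * s)) by rewrite divr_ge0 // subr_ge0 ltW.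
have D_ge0 : 0 <= norm2 xt + norm2 e by rewrite addr_ge0 ?norm2_ge0.
have tau_eq : 2 / (1 - 2 * (Num.sqrt 2 * s)) * (1 - 2 * (Num.sqrt 2 * s)) = 2.
  by rewrite divfK // subr_eq0 gt_eqF.
have p0 : norm2 (u 0 - xh) <= norm2 xh by rewrite u0 sub0r norm2N.
have q0 : norm2 (v 0) <= 0 by rewrite v0 norm20.
have p_succ j : norm2 (u j.+1 - xh) <=
    2 * (norm2 xt + norm2 e) + 2 * (Num.sqrt 2 * s) * norm2 (v j).
  by rewrite mulrA; exact: xerr_succ_le_coarse.
have q_succ j : norm2 (v j.+1) <= norm2 xt + norm2 e + Num.sqrt 2 * s * norm2 (u j - xh).
  exact: enorm_succ_le.
exact: (two_step_geometric_le (p := fun j => norm2 (u j - xh)) (q := fun j => norm2 (v j))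
  sigma_ge0 tau_ge0 D_ge0 (norm2_ge0 _) tau_eq p0 q0 p_succ q_succ).
Qed.

End IHTErrors.

Unset Implicit Arguments.

Theorem theorem1 (R : realType) (n : nat) (F : 'M[R[i]]_n) (c : R)
  (xhat e : 'cV[R[i]]_n) (k t : nat) :
  (1 <= n)%N -> unitary F -> 0 < c ->
  (forall i j, cabs (F i j) ^+ 2 <= c / n%:R) ->
  (1 <= t)%N -> sparse t e -> (1 <= k <= n)%N ->
  let A := row_mx F (1%:M : 'M[R[i]]_n) in
  let y := F *m xhat + e in
  let xh := hthr k xhat in
  let xt := tthr k xhat in
  let out T := usubmx (IHT y A k t T) in
  let s := Num.sqrt (c * k%:R * t%:R / n%:R) in
  (* part (a) *)
  (let rho := Num.sqrt 27 * s in
   let tau := Num.sqrt 3 * Num.sqrt (1 + 2 * s) / (1 - rho) in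
   0 < rho < 1 ->
   (forall T : nat, (1 <= T)%N ->
      norm2 (out T - xh) <=
        rho ^+ T.+1 * Num.sqrt (norm2 xh ^+ 2 + norm2 e ^+ 2) + tau * norm2 xt) /\
   (forall (eps : R) (T : nat), 0 < eps < 1 -> (1 <= T)%N ->
      (ln (1 / eps) + ln (Num.sqrt (norm2 xh ^+ 2 + norm2 e ^+ 2))) / ln (1 / rho)
        <= T%:R ->
      norm2 (out T - xh) <= tau * norm2 xt + eps)) /\
  (* part (b) *)
  (let rho := 2 * Num.sqrt 2 * s in
   let tau := 2 / (1 - rho) in
   0 < rho < 1 ->
   (forall T : nat, (1 <= T)%N ->
      norm2 (out T - xh) <= rho ^+ T.+1 * norm2 xh + tau * (norm2 xt + norm2 e)) /\
   (forall (eps : R) (T : nat), 0 < eps < 1 -> (1 <= T)%N ->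
      (ln (1 / eps) + ln (norm2 xh)) / ln (1 / rho) <= T%:R ->
      norm2 (out T - xh) <= tau * (norm2 xt + norm2 e) + eps)).
Proof.
move=> _ [FF FF'] c_gt0 F_coh _ e_sparse _ A y xh xt out s.
have c_ge0 := ltW c_gt0.
have bound_a := iht_bound_a (k := k) xhat FF c_ge0 F_coh e_sparse.
have bound_b := iht_bound_b (k := k) (t := t) xhat e FF FF' c_ge0 F_coh.
split=> rho tau rho_01; split=> [T _|eps T /andP[eps_gt0 _] _ T_ge].
- exact: bound_a.
- apply: (le_trans (bound_a T rho_01)); rewrite addrC lerD2l.
  by apply: geometric_tail_le; rewrite ?sqrtr_ge0.
- exact: bound_b.
- apply: (le_trans (bound_b T rho_01)); rewrite addrC lerD2l.
  by apply: geometric_tail_le; rewrite ?norm2_ge0.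
Qed.
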